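(* Suppose the loss has the form $\ell(z,\theta)=q(\theta)\cdot\phi(z)$ for functions $q:\Theta\to\mathbb{R}^k$ and $\phi:\mathcal{Z}\to\mathbb{R}^k$. Suppose further that there exist constants $n_0$ and $\phi_0\in\mathbb{R}^k$ such that, for any training set $Z=\{z_1,\dots,z_n\}$ with $Z\sim\mathcal{D}^n$ and $\mathcal{D}\sim\mathcal{D}_1$, \[ \mathbb{E}_{\mathcal{D}\sim\mathcal{D}_1}\big[\mathbb{E}_{z\sim\mathcal{D}}[\phi(z)]\,\big|\,Z\big]=\frac{\phi_0+\sum_{i=1}^n\phi(z_i)}{n+n_0}. \] Then $R^*(\theta)=\frac1n q(\theta)\cdot\phi_0$ is a perfect, Bayes-optimal regularizer.
   Context: The data distribution $\mathcal{D}$ over examples $z\in\mathcal{Z}$ is itself drawn from a prior $\mathcal{D}_1$ over distributions. The training loss is $\hat L(\theta)=\frac1n\sum_{i=1}^n\ell(z_i,\theta)$, and $L(\theta,\mathcal{D})=\mathbb{E}_{z\sim\mathcal{D}}[\ell(z,\theta)]$. The conditional expected test loss is $\bar L(\theta,Z)=\mathbb{E}_{\mathcal{D}\sim\mathcal{D}_1}[L(\theta,\mathcal{D})\mid Z]$. A regularizer $R^*$ is Bayes-optimal if $\arg\min_{\theta\in\Theta}\{\hat L(\theta)+R^*(\theta)\}=\arg\min_{\theta\in\Theta}\{\bar L(\theta,Z)\}$. It is perfect if, in addition, $\hat L(\theta)+R^*(\theta)=h(\bar L(\theta,Z))$ for all $\theta\in\Theta$, for some monotone function $h$. *)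

From HB Require Import structures.
From mathcomp Require Import all_boot all_order all_algebra.
From mathcomp Require Import all_classical all_reals all_analysis.
Set Implicit Arguments. Unset Strict Implicit. Unset Printing Implicit Defensive.
Import Order.TTheory GRing.Theory Num.Theory.
Local Open Scope classical_set_scope.
Local Open Scope ring_scope.

Section Defs.
Context {R : realType}.

Definition dotk (k : nat) (u v : 'I_k -> R) : R := \sum_(i < k) u i * v i.

Definition train_loss {Z Theta : Type} (ell : Z -> Theta -> R)
  (Zs : seq Z) (theta : Theta) : R :=
  (size Zs)%:R^-1 * \sum_(z <- Zs) ell z theta.

(* L(theta, D) = E_{z ~ D} [ l(z, theta) ] ; D is an index of the
   distribution family [dist] *)
Definition test_loss {dZ dD : measure_display} {Z : measurableType dZ}
  {Dset : measurableType dD} {Theta : Type}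
  (dist : Dset -> probability Z R) (ell : Z -> Theta -> R)
  (theta : Theta) (D : Dset) : R :=
  Rintegral (dist D) setT (fun z => ell z theta).

(* conditional expected test loss  Lbar(theta, Z) = E_{D ~ D1}[L(theta,D) | Z],
   the conditional expectation given the training set being the integral
   against the posterior [post Zs] of D1 given Zs *)
Definition cond_test_loss {dZ dD : measure_display} {Z : measurableType dZ}
  {Dset : measurableType dD} {Theta : Type}
  (post : seq Z -> probability Dset R) (dist : Dset -> probability Z R)
  (ell : Z -> Theta -> R) (Zs : seq Z) (theta : Theta) : R :=
  Rintegral (post Zs) setT (test_loss dist ell theta).

Definition argmin {Theta : Type} (f : Theta -> R) : set Theta :=
  [set t | forall t', f t <= f t'].

Definition bayes_optimal {dZ dD : measure_display} {Z : measurableType dZ}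
  {Dset : measurableType dD} {Theta : Type}
  (post : seq Z -> probability Dset R) (dist : Dset -> probability Z R)
  (ell : Z -> Theta -> R) (Zs : seq Z) (Rs : Theta -> R) : Prop :=
  argmin (fun theta => train_loss ell Zs theta + Rs theta)
  = argmin (cond_test_loss post dist ell Zs).

(* monotone = strictly increasing *)
Definition perfect {dZ dD : measure_display} {Z : measurableType dZ}
  {Dset : measurableType dD} {Theta : Type}
  (post : seq Z -> probability Dset R) (dist : Dset -> probability Z R)
  (ell : Z -> Theta -> R) (Zs : seq Z) (Rs : Theta -> R) : Prop :=
  bayes_optimal post dist ell Zs Rs /\
  exists h : R -> R, {homo h : x y / x < y} /\
    forall theta, train_loss ell Zs theta + Rs theta
                  = h (cond_test_loss post dist ell Zs theta).

End Defs.

From HB Require Import structures.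
From mathcomp Require Import all_boot all_order all_algebra.
From mathcomp Require Import all_classical all_reals all_analysis.
From mathcomp Require Import lra.
Set Implicit Arguments. Unset Strict Implicit. Unset Printing Implicit Defensive.
Import Order.TTheory GRing.Theory Num.Theory.
Local Open Scope classical_set_scope.
Local Open Scope ring_scope.

(* For a loss linear in the sufficient statistic [phi], both the regularized
   training loss and the conditional test loss are [dotk (q theta) S] up to a
   positive factor, where [S = phi0 + sum_i phi z_i]: the former by linearity
   of the finite sum, the latter by linearity of the two integrals and the
   posterior-mean hypothesis.  The two objectives are therefore positive
   multiples of each other, which makes the regularizer perfect and hence
   Bayes-optimal. *)

Section Integral.
Context d (T : measurableType d) (R : realType) (mu : {measure set T -> \bar R}).

Lemma Rintegral_sum (D : set T) (mD : measurable D) I (s : seq I)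
    (f : I -> T -> R) :
  (forall i, mu.-integrable D (EFin \o f i)) ->
  Rintegral mu D (fun x => \sum_(i <- s) f i x)
  = \sum_(i <- s) Rintegral mu D (f i).
Proof.
move=> fi; elim: s => [|i s IH].
  under eq_Rintegral do rewrite big_nil.
  by rewrite big_nil Rintegral_cst // mul0r.
under eq_Rintegral do rewrite big_cons.
rewrite big_cons RintegralD //; first by rewrite IH.
have -> : EFin \o (fun x => \sum_(j <- s) f j x)
          = (fun x => \sum_(j <- s) (EFin \o f j) x)%E.
  by apply/funext => x /=; rewrite sumEFin.
exact: integrable_sum.
Qed.

Lemma Rintegral_dotk (D : set T) (mD : measurable D) k (u : 'I_k -> R)
    (f : T -> 'I_k -> R) :
  (forall i, mu.-integrable D (fun x => (f x i)%:E)) ->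
  Rintegral mu D (fun x => dotk u (f x))
  = dotk u (fun i => Rintegral mu D (fun x => f x i)).
Proof.
move=> fi; rewrite /dotk Rintegral_sum //; last first.
  move=> i; have -> : EFin \o (fun x => u i * f x i)
                      = (fun x => (u i)%:E * (f x i)%:E)%E.
    by apply/funext => x /=; rewrite EFinM.
  exact: integrableZl.
by apply: eq_bigr => i _; rewrite (RintegralZl _ mD (fi i)).
Qed.

End Integral.

Section DotProduct.
Context {R : realType} {k : nat}.

Lemma dotkDr (u v w : 'I_k -> R) :
  dotk u (fun i => v i + w i) = dotk u v + dotk u w.
Proof. by rewrite /dotk -big_split; apply: eq_bigr => i _; rewrite mulrDr. Qed.

Lemma dotkZr (u v : 'I_k -> R) (c : R) :
  dotk u (fun i => v i * c) = dotk u v * c.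
Proof. by rewrite /dotk mulr_suml; apply: eq_bigr => i _; rewrite mulrA. Qed.

Lemma dotk_sumr I (s : seq I) (u : 'I_k -> R) (f : I -> 'I_k -> R) :
  \sum_(j <- s) dotk u (f j) = dotk u (fun i => \sum_(j <- s) f j i).
Proof.
rewrite /dotk exchange_big; apply: eq_bigr => i _.
by rewrite mulr_sumr.
Qed.

End DotProduct.

Section Objectives.
Context {R : realType}.

Lemma argmin_homo {Theta : Type} (h : R -> R) (f : Theta -> R) :
  {homo h : x y / x < y} -> argmin (h \o f) = argmin f.
Proof.
move=> hh; apply/seteqP; split => t /= ft t'; last by rewrite (le_mono hh).
by rewrite -(le_mono hh); exact: ft.
Qed.

Lemma perfect_of_homo {dZ dD : measure_display} {Z : measurableType dZ}
    {Dset : measurableType dD} {Theta : Type}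
    (post : seq Z -> probability Dset R) (dist : Dset -> probability Z R)
    (ell : Z -> Theta -> R) (Zs : seq Z) (Rs : Theta -> R) (h : R -> R) :
  {homo h : x y / x < y} ->
  (forall theta, train_loss ell Zs theta + Rs theta
                 = h (cond_test_loss post dist ell Zs theta)) ->
  perfect post dist ell Zs Rs.
Proof.
move=> hh hrep; split; last by exists h.
rewrite /bayes_optimal -(argmin_homo (cond_test_loss post dist ell Zs) hh).
by congr argmin; apply/funext => theta; exact: hrep.
Qed.

Lemma train_loss_dotk {Z Theta : Type} k (q : Theta -> 'I_k -> R)
    (phi : Z -> 'I_k -> R) (Zs : seq Z) (theta : Theta) :
  train_loss (fun z theta => dotk (q theta) (phi z)) Zs theta
  = (size Zs)%:R^-1 * dotk (q theta) (fun i => \sum_(z <- Zs) phi z i).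
Proof. by rewrite /train_loss dotk_sumr. Qed.

Lemma cond_test_loss_dotk {dZ dD : measure_display} {Z : measurableType dZ}
    {Dset : measurableType dD} {Theta : Type}
    (post : seq Z -> probability Dset R) (dist : Dset -> probability Z R)
    k (q : Theta -> 'I_k -> R) (phi : Z -> 'I_k -> R) (Zs : seq Z)
    (theta : Theta) :
  (forall D i, (dist D).-integrable setT (fun z => (phi z i)%:E)) ->
  (forall i, (post Zs).-integrable setT
      (fun D => (Rintegral (dist D) setT (fun z => phi z i))%:E)) ->
  cond_test_loss post dist (fun z theta => dotk (q theta) (phi z)) Zs theta
  = dotk (q theta) (fun i => Rintegral (post Zs) setT
                       (fun D => Rintegral (dist D) setT (fun z => phi z i))).
Proof.
move=> hdist hpost; rewrite /cond_test_loss /test_loss.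
under eq_Rintegral => D _ do rewrite (Rintegral_dotk measurableT _ (hdist D)).
exact: Rintegral_dotk.
Qed.

End Objectives.

Theorem lemma1 (R : realType) (dZ dD : measure_display)
  (Z : measurableType dZ) (Dset : measurableType dD) (Theta : Type)
  (dist : Dset -> probability Z R) (post : seq Z -> probability Dset R)
  (k : nat) (q : Theta -> 'I_k -> R) (phi : Z -> 'I_k -> R)
  (ell : Z -> Theta -> R)
  (n0 : R) (phi0 : 'I_k -> R) :
  (forall z theta, ell z theta = dotk (q theta) (phi z)) ->
  (forall D i, (dist D).-integrable setT (fun z => (phi z i)%:E)) ->
  (forall Zs i, (post Zs).-integrable setT
      (fun D => (Rintegral (dist D) setT (fun z => phi z i))%:E)) ->
  -1 < n0 ->
  (forall Zs i,
      Rintegral (post Zs) setT (fun D => Rintegral (dist D) setT (fun z => phi z i))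
      = (phi0 i + \sum_(z <- Zs) phi z i) / ((size Zs)%:R + n0)) ->
  forall Zs : seq Z, (0 < size Zs)%N ->
    perfect post dist ell Zs
      (fun theta => (size Zs)%:R^-1 * dotk (q theta) phi0).
Proof.
move=> hell hdist hpost hn0 hmean Zs hZs.
have -> : ell = fun z theta => dotk (q theta) (phi z).
  by apply/funext => z; apply/funext => theta; exact: hell.
set n := (size Zs)%:R.
have n_gt0 : 0 < n by rewrite ltr0n.
have nn0_gt0 : 0 < n + n0.
  have n_ge1 : 1 <= n by rewrite ler1n.
  lra.
apply: (perfect_of_homo (h := fun x => (n + n0) / n * x)).
  by move=> x y xy; rewrite ltr_pM2l ?divr_gt0.
move=> theta; rewrite train_loss_dotk cond_test_loss_dotk // (funext (hmean Zs)) -/n.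
rewrite dotkZr -mulrDr addrC -dotkDr.
by rewrite [RHS]mulrC -mulrA (mulKf (lt0r_neq0 nn0_gt0)) mulrC.
Qed.
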